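(* Let $G$ be an infinite finitely generated group and let $p\in\mathbb{N}$, $p\ge 2$. Then $HX_0(G,\mathbb{Z}_p)=0$. Equivalently: for every function $c\colon G\to\mathbb{Z}_p$ there exist $R>0$ and a $1$-chain $\psi=\sum_{x,y\in G}\psi_{[x,y]}[x,y]$ with coefficients $\psi_{[x,y]}\in\mathbb{Z}_p$ and $\psi_{[x,y]}=0$ whenever $d(x,y)\ge R$, such that $\partial\psi=c$.
   Context: Fix a finite symmetric generating set $S$ of $G$ and let $d$ be the word metric on $G$ with respect to $S$ (equivalently the path metric of the Cayley graph $\Gamma_G$). For an abelian group $A$, let $CX_0(G,A)$ be the group of all functions $G\to A$ (formal sums $\sum_{x\in G}c_x x$, possibly infinite), and let $CX_1(G,A)$ be the group of formal (possibly infinite) $1$-chains $c=\sum_{x,y\in G}c_{[x,y]}[x,y]$ with $c_{[x,y]}\in A$ such that for each $c$ there is $R>0$ with $c_{[x,y]}=0$ whenever $d(x,y)\ge R$. The differential $\partial\colon CX_1(G,A)\to CX_0(G,A)$ is the $A$-linear extension of $\partial[x,y]=y-x$ (well defined since, by the bounded-range condition and local finiteness, each vertex receives finitely many contributions). The $0$-th coarse (locally finite) homology is $HX_0(G,A)=CX_0(G,A)/\operatorname{Im}\partial$. Here $\mathbb{Z}_p$ is the cyclic group of order $p$. *)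

From HB Require Import structures.
From mathcomp Require Import all_boot all_order all_algebra.
Set Implicit Arguments.
Unset Strict Implicit.
Unset Printing Implicit Defensive.
Import GRing.Theory.

Section CoarseDefs.
Variable G : groupType.
Local Open Scope group_scope.

Definition word_prod (w : seq G) : G := foldr (fun s acc => s * acc) 1 w.

Definition symmetric_gen (S : seq G) : Prop := forall s, s \in S -> s^-1 \in S.

(* S generates G (as a monoid; for symmetric S this is the same as as a group) *)
Definition generates (S : seq G) : Prop :=
  forall g : G, exists w : seq G, all (fun s => s \in S) w /\ g = word_prod w.

Definition infinite_group : Prop := ~ exists s : seq G, forall g : G, g \in s.

Definition word_dist_lt (S : seq G) (x y : G) (R : nat) : Prop :=
  exists w : seq G, [/\ all (fun s => s \in S) w, (size w < R)%N & y = x * word_prod w].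
End CoarseDefs.

Section Chains.
Variables (G : groupType) (A : zmodType).
Local Open Scope ring_scope.

(* A 1-chain is psi : G -> G -> A, psi x y = coefficient of [x,y].
   bounded_range S psi R : psi_[x,y] = 0 whenever d(x,y) >= R. *)
Definition bounded_range (S : seq G) (psi : G -> G -> A) (R : nat) : Prop :=
  forall x y : G, psi x y != 0 -> word_dist_lt S x y R.

(* boundary psi = c, where (boundary psi)(v) = sum_x psi_[x,v] - sum_y psi_[v,y]
   (from d[x,y] = y - x); the sums are over any finite duplicate-free list s
   containing all x with a nonzero coefficient psi_[x,v] or psi_[v,x]. *)
Definition is_boundary (psi : G -> G -> A) (c : G -> A) : Prop :=
  forall v : G, exists s : seq G,
    [/\ uniq s,
        (forall x : G, x \notin s -> psi x v = 0 /\ psi v x = 0)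
      & c v = \sum_(x <- s) (psi x v - psi v x)].
End Chains.

From HB Require Import structures.
From mathcomp Require Import all_boot all_order all_algebra.
From mathcomp Require Import zify boolp.
Set Implicit Arguments. Unset Strict Implicit. Unset Printing Implicit Defensive.
Import GRing.Theory.

(* Idea: choose a geodesic spanning tree of the Cayley graph, rooted at 1,
   whose edges [parent v, v] all have length 1.  A function c : G -> A is the
   boundary of a chain supported on tree edges as soon as one finds a "flow"
   f (the coefficient of the edge entering v) with
       c v = f v - sum of f over the children of v      (f 1 := 0).
   If the subtree below v is finite, f v must be the sum of c over it.  The
   remaining vertices have infinite subtrees; since the tree is infinite and
   locally finite, Koenig's lemma gives each of them a child with an infinite
   subtree (its "heir"), and the missing mass is pushed down this ray. *)

Section FlowsOnTrees.
Variables (V : eqType) (root : V) (par : V -> V) (depth : V -> nat)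
  (children : V -> seq V).
Hypothesis par_root : par root = root.
Hypothesis depth_par : forall v, v != root -> depth v = (depth (par v)).+1.
Hypothesis mem_children :
  forall v w, (w \in children v) = (w != root) && (par w == v).
Hypothesis uniq_children : forall v, uniq (children v).
Hypothesis depth_unbounded : forall M, exists u, (M < depth u)%N.

Definition descendant (v u : V) : Prop := exists k, iter k par u = v.

Lemma par_child v w : w \in children v -> par w = v.
Proof. by rewrite mem_children => /andP[_ /eqP]. Qed.

Lemma depth_child v w : w \in children v -> depth w = (depth v).+1.
Proof.
move=> wv; have := wv; rewrite mem_children => /andP[w_root _].
by rewrite depth_par // (par_child wv).
Qed.

Lemma descendant_refl v : descendant v v.
Proof. by exists 0%N. Qed.

Lemma descendant_child v w u : w \in children v -> descendant w u -> descendant v u.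
Proof. by move=> wv [k wk]; exists k.+1; rewrite iterS wk (par_child wv). Qed.

Lemma descendant_root u : descendant root u.
Proof.
have [n] := ubnP (depth u); elim: n u => // n IH u /ltnSE du.
have [-> | u_root] := eqVneq u root; first exact: descendant_refl.
have [k pk] : descendant root (par u) by apply: IH; rewrite -ltnS -depth_par.
by exists k.+1; rewrite iterSr.
Qed.

Lemma descendant_split v u :
  descendant v u -> u = v \/ exists2 w, w \in children v & descendant w u.
Proof.
case=> k; elim: k => [|k IH] /= Hk; first by left.
have [w_root | w_root] := eqVneq (iter k par u) root.
  by apply: IH; rewrite w_root -Hk w_root par_root.
by right; exists (iter k par u); [rewrite mem_children w_root Hk eqxx | exists k].
Qed.

(* The subtree of v has bounded depth, i.e. (the tree being locally finite)
   it is finite. *)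
Definition bounded_subtree (v : V) : Prop :=
  exists M, forall u, descendant v u -> (depth u <= M)%N.

Lemma root_unbounded : ~ bounded_subtree root.
Proof.
case=> M HM; have [u Mu] := depth_unbounded M.
by have := HM u (descendant_root u); rewrite leqNgt Mu.
Qed.

Lemma bounded_child v w :
  bounded_subtree v -> w \in children v -> bounded_subtree w.
Proof. by move=> [M HM] wv; exists M => u /(descendant_child wv) /HM. Qed.

Lemma bounded_seq (s : seq V) : (forall w, w \in s -> bounded_subtree w) ->
  exists M, forall w u, w \in s -> descendant w u -> (depth u <= M)%N.
Proof.
elim: s => [|x s IH] Hs; first by exists 0%N.
have [Mx HMx] := Hs x (mem_head x s).
have [Ms HMs] : exists M, forall w u, w \in s -> descendant w u -> (depth u <= M)%N.
  by apply: IH => w ws; apply: Hs; rewrite in_cons ws orbT.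
exists (maxn Mx Ms) => w u; rewrite in_cons leq_max => /predU1P[-> | ws] wu.
  by rewrite HMx.
by rewrite (HMs w u ws wu) orbT.
Qed.

Lemma unbounded_child v :
  ~ bounded_subtree v -> exists2 w, w \in children v & ~ bounded_subtree w.
Proof.
move=> v_unb; apply: contrapT => no_child; apply: v_unb.
have [M HM] : exists M, forall w u, w \in children v -> descendant w u -> (depth u <= M)%N.
  apply: bounded_seq => w wv; apply: contrapT => w_unb; apply: no_child; by exists w.
exists (maxn M (depth v)) => u /descendant_split [-> | [w wv wu]].
  by rewrite leq_maxr.
by rewrite leq_max (HM w u wv wu).
Qed.

Definition boundedb (v : V) : bool := `[< bounded_subtree v >].

Variables (Z : zmodType) (c : V -> Z).
Local Open Scope ring_scope.

Fixpoint subtree_sum_upto (n : nat) (v : V) : Z :=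
  if n is n'.+1 then c v + \sum_(w <- children v) subtree_sum_upto n' w else c v.

Lemma subtree_sum_upto_stable M k v :
  (forall u, descendant v u -> (depth u <= M)%N) -> (M - depth v <= k)%N ->
  forall n, (k <= n)%N -> subtree_sum_upto n v = subtree_sum_upto k v.
Proof.
elim: k v => [|k IH] v HM vk n kn.
  have leaf m : subtree_sum_upto m v = c v.
    case: m => [//|m] /=; rewrite big1_seq ?addr0 // => w /andP[_ wv].
    by have := HM w (descendant_child wv (descendant_refl w)); rewrite (depth_child wv); lia.
  by rewrite !leaf.
case: n kn => [//|n] kn /=; congr (_ + _); apply: eq_big_seq => w wv.
apply: IH => [u wu | |//]; first exact/HM/(descendant_child wv).
by rewrite (depth_child wv); lia.
Qed.

Definition depth_bound (v : V) : nat :=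
  if pselect (bounded_subtree v) is left bv then proj1_sig (cid bv) else 0.

Lemma depth_boundP v :
  bounded_subtree v -> forall u, descendant v u -> (depth u <= depth_bound v)%N.
Proof.
by rewrite /depth_bound; case: pselect => // bv _; case: (cid bv).
Qed.

(* The total mass of c on a bounded subtree. *)
Definition subtree_sum (v : V) : Z := subtree_sum_upto (depth_bound v - depth v) v.

Lemma subtree_sum_rec v : bounded_subtree v ->
  subtree_sum v = c v + \sum_(w <- children v) subtree_sum w.
Proof.
move=> bv; rewrite /subtree_sum.
rewrite -(subtree_sum_upto_stable (depth_boundP bv) (leqnn _) (leqnSn _)) /=.
congr (_ + _); apply: eq_big_seq => w wv.
have bound_w u : descendant w u -> (depth u <= depth_bound v)%N.
  by move=> /(descendant_child wv) /(depth_boundP bv).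
set K := maxn (depth_bound v - depth v) (depth_bound w - depth w).
have wK : (depth_bound v - depth w <= depth_bound v - depth v)%N.
  by rewrite (depth_child wv); lia.
rewrite -(subtree_sum_upto_stable bound_w wK (leq_maxl _ _ : (_ <= K)%N)).
by rewrite (subtree_sum_upto_stable (depth_boundP (bounded_child bv wv)) (leqnn _) (leq_maxr _ _)).
Qed.

Definition heir (v : V) : V :=
  if pselect (exists w, w \in children v /\ ~ bounded_subtree w) is left hv
  then proj1_sig (cid hv) else v.

Lemma heirP v :
  ~ bounded_subtree v -> heir v \in children v /\ ~ bounded_subtree (heir v).
Proof.
move=> v_unb; rewrite /heir; case: pselect => [hv | no_heir].
  by case: (cid hv).
by have [w wv w_unb] := unbounded_child v_unb; case: no_heir; exists w.
Qed.

(* The flow on vertices with infinite subtrees: zero unless v is the heir of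
   its parent, in which case it carries whatever the parent's balance leaves
   over; defined by recursion on the depth. *)
Fixpoint ray_flow_upto (n : nat) (v : V) : Z :=
  if n is n'.+1 then
    if (v != root) && (heir (par v) == v) then
      ray_flow_upto n' (par v) - c (par v)
        - \sum_(w <- children (par v) | boundedb w) subtree_sum w
    else 0
  else 0.

Definition ray_flow (v : V) : Z := ray_flow_upto (depth v) v.

Lemma ray_flow_root : ray_flow root = 0.
Proof. by rewrite /ray_flow; case: (depth root) => //= n; rewrite eqxx. Qed.

Lemma ray_flow_heir v : ~ bounded_subtree v ->
  ray_flow (heir v) =
  ray_flow v - c v - \sum_(w <- children v | boundedb w) subtree_sum w.
Proof.
move=> /heirP[hv _]; have := hv; rewrite mem_children => /andP[h_root _].
by rewrite /ray_flow (depth_child hv) /= (par_child hv) h_root eqxx.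
Qed.

Lemma ray_flow_other v w : w \in children v -> w != heir v -> ray_flow w = 0.
Proof.
move=> wv w_heir; rewrite /ray_flow (depth_child wv) /= (par_child wv).
by rewrite [heir v == w]eq_sym (negbTE w_heir) andbF.
Qed.

Definition flow (v : V) : Z := if boundedb v then subtree_sum v else ray_flow v.

Lemma flow_bounded v : bounded_subtree v -> flow v = subtree_sum v.
Proof. by move=> bv; rewrite /flow /boundedb asboolT. Qed.

Lemma flow_unbounded v : ~ bounded_subtree v -> flow v = ray_flow v.
Proof. by move=> v_unb; rewrite /flow /boundedb asboolF. Qed.

Theorem flow_balance v :
  c v = (if v != root then flow v else 0) - \sum_(w <- children v) flow w.
Proof.
have [bv | v_unb] := asboolP (bounded_subtree v).
  have v_root : v != root by apply/eqP => v_root; apply: root_unbounded; rewrite -v_root.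
  have -> : \sum_(w <- children v) flow w = \sum_(w <- children v) subtree_sum w.
    by apply: eq_big_seq => w wv; apply: flow_bounded (bounded_child bv wv).
  by rewrite v_root flow_bounded // subtree_sum_rec // addrK.
have -> : (if v != root then flow v else 0) = ray_flow v.
  case: eqVneq => [-> | _]; first by rewrite ray_flow_root.
  by rewrite flow_unbounded.
have [hv h_unb] := heirP v_unb.
have ray_sum : \sum_(w <- children v | ~~ boundedb w) flow w = ray_flow (heir v).
  rewrite -big_filter (bigD1_seq (heir v)) ?filter_uniq //=; last first.
    by rewrite mem_filter hv andbT; apply/asboolP.
  rewrite big1_seq ?addr0 => [|w /andP[w_heir]]; last first.
    by rewrite mem_filter => /andP[/asboolP w_unb wv]; rewrite flow_unbounded // (ray_flow_other wv).
  by rewrite flow_unbounded.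
rewrite (bigID boundedb) /= ray_sum ray_flow_heir //.
rewrite (eq_bigr subtree_sum) => [|w /asboolP]; last exact: flow_bounded.
set X := \sum_(_ <- _ | _) _.
by rewrite (addrC X) subrK opprB addrC subrK.
Qed.

End FlowsOnTrees.

Section GeodesicTree.
Variables (G : groupType) (S : seq G).
Hypothesis S_generates : generates S.
Local Open Scope group_scope.

Lemma word_prod_rcons (w : seq G) t : word_prod (rcons w t) = word_prod w * t.
Proof. by elim: w => [|x w IH] /=; rewrite ?mul1g ?mulg1 ?IH ?mulgA. Qed.

Definition spelled_by (n : nat) (v : G) : Prop :=
  exists w, [/\ all (fun s => s \in S) w, size w = n & v = word_prod w].

Lemma spelled_somehow v : exists n, `[< spelled_by n v >].
Proof. by have [w [Sw ->]] := S_generates v; exists (size w); apply/asboolP; exists w. Qed.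

Definition word_length (v : G) : nat := ex_minn (spelled_somehow v).

Lemma word_lengthP v : spelled_by (word_length v) v.
Proof. by rewrite /word_length; case: ex_minnP => n /asboolP. Qed.

Lemma word_length_min v w :
  all (fun s => s \in S) w -> v = word_prod w -> (word_length v <= size w)%N.
Proof.
by move=> Sw vw; rewrite /word_length; case: ex_minnP => n _; apply; apply/asboolP; exists w.
Qed.

Definition geodesic (v : G) : seq G := proj1_sig (cid (word_lengthP v)).

Lemma geodesicP v : [/\ all (fun s => s \in S) (geodesic v),
  size (geodesic v) = word_length v & v = word_prod (geodesic v)].
Proof. by rewrite /geodesic; case: cid. Qed.

Definition parent (v : G) : G :=
  word_prod (take (size (geodesic v)).-1 (geodesic v)).
Definition last_letter (v : G) : G := last 1 (geodesic v).

Lemma word_length_one : word_length 1 = 0%N.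
Proof. by apply/eqP; rewrite -leqn0 (word_length_min (w := [::])). Qed.

Lemma word_length_eq0 v : word_length v = 0%N -> v = 1.
Proof. by case: (geodesicP v) => _ <- def_v /size0nil g0; rewrite def_v g0. Qed.

Lemma parent_one : parent 1 = 1.
Proof.
by case: (geodesicP 1) => _; rewrite word_length_one /parent => /size0nil ->.
Qed.

Lemma parent_spec v : v != 1 -> [/\ last_letter v \in S,
  v = parent v * last_letter v & word_length v = (word_length (parent v)).+1].
Proof.
move=> v1; case: (geodesicP v); rewrite /parent /last_letter.
case/lastP: (geodesic v) => [_ _ v_one | w t]; first by rewrite v_one eqxx in v1.
rewrite all_rcons size_rcons -cats1 take_size_cat // last_cat cats1 word_prod_rcons.
move=> /andP[St Sw] len_v vwt; split=> //.
have [w' [Sw' len_w ww']] := word_lengthP (word_prod w).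
apply/eqP; rewrite -len_v eqSS eqn_leq (word_length_min Sw) // andbT -len_w -ltnS.
by rewrite len_v -(size_rcons w' t) word_length_min ?all_rcons ?St // word_prod_rcons -ww'.
Qed.

Definition tree_children (v : G) : seq G :=
  [seq w <- undup [seq v * t | t <- S] | (w != 1) && (parent w == v)].

Lemma mem_tree_children v w :
  (w \in tree_children v) = (w != 1) && (parent w == v).
Proof.
rewrite mem_filter; case: (boolP (w != 1)) => //= w1; case: eqP => //= <-.
have [Sw def_w _] := parent_spec w1.
by rewrite mem_undup {1}def_w map_f.
Qed.

Lemma uniq_tree_children v : uniq (tree_children v).
Proof. by rewrite filter_uniq ?undup_uniq. Qed.

Lemma parent_length v : v != 1 -> word_length v = (word_length (parent v)).+1.
Proof. by case/parent_spec. Qed.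

(* The parent of v is not one of its children (their lengths differ by 2). *)
Lemma parent_not_child v : parent v \notin tree_children v.
Proof.
rewrite mem_tree_children; apply/andP=> [[p1 /eqP ppv]].
have v1 : v != 1 by apply: contraNneq p1 => ->; rewrite parent_one.
by have := parent_length p1; rewrite ppv (parent_length v1); lia.
Qed.

Lemma ball_finite n : exists l : seq G, forall g, (word_length g <= n)%N -> g \in l.
Proof.
elim: n => [|n [l Hl]].
  by exists [:: 1] => g; rewrite leqn0 => /eqP/word_length_eq0 ->; rewrite mem_head.
exists (l ++ [seq x * t | x <- l, t <- S]) => g gn.
have [-> | g1] := eqVneq g 1; first by rewrite mem_cat Hl // word_length_one.
have [St def_g len_g] := parent_spec g1.
by rewrite mem_cat def_g allpairs_f ?orbT // Hl // -ltnS -len_g.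
Qed.

Lemma word_length_unbounded :
  infinite_group G -> forall M, exists u, (M < word_length u)%N.
Proof.
move=> G_inf M; apply: contrapT => bounded; apply: G_inf.
have [l Hl] := ball_finite M; exists l => g; apply: Hl.
by rewrite leqNgt; apply/negP => Mg; apply: bounded; exists g.
Qed.

Section TreeChains.
Variable Z : zmodType.
Local Open Scope ring_scope.

Definition tree_chain (f : G -> Z) (x y : G) : Z :=
  if y \in tree_children x then f y else 0.

(* Tree edges have length 1, so the chain has range 2. *)
Lemma tree_chain_range f : bounded_range S (tree_chain f) 2.
Proof.
move=> x y; rewrite /tree_chain; case: ifP => [yx _ | _]; last by rewrite eqxx.
move: yx; rewrite mem_tree_children => /andP[y1 /eqP <-].
by have [St def_y _] := parent_spec y1; exists [:: last_letter y]; rewrite /= St mulg1.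
Qed.

(* A balanced flow yields a chain with boundary c; the support of the
   chain around v is {parent v} together with the children of v. *)
Lemma tree_chain_boundary (f c : G -> Z) :
  (forall v, c v = (if v != 1%g then f v else 0) - \sum_(w <- tree_children v) f w) ->
  is_boundary (tree_chain f) c.
Proof.
move=> balance v; exists (parent v :: tree_children v); split.
- by rewrite /= parent_not_child uniq_tree_children.
- move=> x; rewrite in_cons negb_or => /andP[xp xv].
  by rewrite /tree_chain (negbTE xv) mem_tree_children [parent v == x]eq_sym (negbTE xp) andbF.
rewrite big_cons /tree_chain (negbTE (parent_not_child v)) subr0 mem_tree_children eqxx andbT.
rewrite balance -sumrN; congr (_ + _); apply: eq_big_seq => x xv.
rewrite xv mem_tree_children; case: (eqVneq (parent v) x) => [px | _]; last by rewrite andbF sub0r.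
by have := parent_not_child v; rewrite px xv.
Qed.

End TreeChains.

End GeodesicTree.

Theorem lemma1 (G : groupType) (S : seq G)
  (Hsym : symmetric_gen S) (Hgen : generates S) (Hinf : infinite_group G)
  (p : nat) (Hp : (1 < p)%N) (c : G -> 'Z_p) :
  exists (R : nat) (psi : G -> G -> 'Z_p),
    (0 < R)%N /\ bounded_range S psi R /\ is_boundary psi c.
Proof.
pose f := flow (1%g : G) (parent Hgen) (word_length Hgen) (tree_children Hgen) c.
exists 2%N, (tree_chain Hgen f); split=> //; split; first exact: tree_chain_range.
apply: tree_chain_boundary => v.
apply: flow_balance.
- exact: parent_one.
- exact: parent_length.
- exact: mem_tree_children.
- exact: uniq_tree_children.
- exact: word_length_unbounded.
Qed.
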